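(* Let $p,q\ge2$, $f(z,w)=z^p+w^q$, and let $a,b\in\mathbb{C}\setminus\{0\}$. Let $c_1,c_2\in\mathbb{C}\setminus\{0\}$ satisfy $c_1^p=a\bar c_1$ and $c_2^q=b\bar c_2$, and put $\mu=a\bar c_1/(b\bar c_2)$. If $P(u,v;\mu)=\mu(u^p+\bar u)+v^q+\bar v$ is an excellent map $\mathbb{R}^4\to\mathbb{R}^2$, then there exists a linear deformation $f_t$, $t\in[0,1]$, of $f$ consisting of excellent maps for $t\in(0,1]$ and satisfying $f_1(z,w)=f(z,w)+a\bar z+b\bar w$. Moreover, if $P$ has no definite fold, then neither does $f_t$ for any $t\in(0,1]$.
   Context: A linear deformation of $f$ is a family $f_t(z,w)=f(z,w)+a_1(t)z+b_1(t)w+a_2(t)\bar z+b_2(t)\bar w$, $t\in[0,1]$, with $a_1,b_1,a_2,b_2$ real-analytic complex-valued functions of $t$ vanishing at $t=0$. A smooth map $g:X^4\to Y^2$ is an excellent map if for every point there are local coordinates centered at it and its image in which $g$ is one of: $(x_1,x_2)$; $(x_1,x_2^2+x_3^2+x_4^2)$ (definite fold); $(x_1,x_2^2+x_3^2-x_4^2)$ (indefinite fold); $(x_1,x_2^2\pm x_3^2+x_1x_4+x_4^3)$ (cusp). *)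

From Stdlib Require Import Reals Lra List.
From Stdlib Require Fin.
Import ListNotations.
Open Scope R_scope.

Definition Cplx := (R * R)%type.
Definition RtoC (x : R) : Cplx := (x, 0).
Definition Cadd (z w : Cplx) : Cplx := (fst z + fst w, snd z + snd w).
Definition Cmul (z w : Cplx) : Cplx :=
  (fst z * fst w - snd z * snd w, fst z * snd w + snd z * fst w).
Definition Cconj (z : Cplx) : Cplx := (fst z, - snd z).
Definition Cinv (z : Cplx) : Cplx :=
  (fst z / (fst z ^ 2 + snd z ^ 2), - snd z / (fst z ^ 2 + snd z ^ 2)).
Definition Cdiv (z w : Cplx) : Cplx := Cmul z (Cinv w).
Fixpoint Cpow (z : Cplx) (n : nat) : Cplx :=
  match n with O => (1, 0) | S k => Cmul z (Cpow z k) end.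
Definition C0 : Cplx := (0, 0).

Definition Rn (n : nat) := Fin.t n -> R.

Definition upd {n} (x : Rn n) (i : Fin.t n) (h : R) : Rn n :=
  fun j => if Fin.eq_dec i j then x j + h else x j.

Definition origin (n : nat) : Rn n := fun _ => 0.

Definition near {n} (x y : Rn n) (d : R) : Prop := forall i, Rabs (y i - x i) < d.

Definition is_open {n} (U : Rn n -> Prop) : Prop :=
  forall x, U x -> exists eps, 0 < eps /\ forall y, near x y eps -> U y.

Definition cont_at {n} (g : Rn n -> R) (x : Rn n) : Prop :=
  forall eps, 0 < eps -> exists d, 0 < d /\
    forall y, near x y d -> Rabs (g y - g x) < eps.

Definition partial_on {n} (U : Rn n -> Prop) (i : Fin.t n) (f g : Rn n -> R) : Prop :=
  forall x, U x -> derivable_pt_lim (fun h => f (upd x i h)) 0 (g x).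

Inductive iter_partial {n} (U : Rn n -> Prop) :
  list (Fin.t n) -> (Rn n -> R) -> (Rn n -> R) -> Prop :=
| ip_nil : forall f, iter_partial U [] f f
| ip_cons : forall i l f g h,
    partial_on U i f g -> iter_partial U l g h -> iter_partial U (i :: l) f h.

Definition smooth_on {n} (U : Rn n -> Prop) (f : Rn n -> R) : Prop :=
  forall l, exists g, iter_partial U l f g /\ forall x, U x -> cont_at g x.

Definition smooth_map_on {n m} (U : Rn n -> Prop) (F : Rn n -> Rn m) : Prop :=
  forall j, smooth_on U (fun x => F x j).

Definition chart_at {n} (x0 : Rn n) (U V : Rn n -> Prop) (phi phinv : Rn n -> Rn n) : Prop :=
  is_open U /\ is_open V /\ U x0 /\ phi x0 = origin n /\
  smooth_map_on U phi /\ smooth_map_on V phinv /\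
  (forall x, U x -> V (phi x) /\ phinv (phi x) = x) /\
  (forall y, V y -> U (phinv y) /\ phi (phinv y) = y).

Definition local_form (g : Rn 4 -> Rn 2) (N : Rn 4 -> Rn 2) (x : Rn 4) : Prop :=
  exists U V phi phinv U' V' psi psinv,
    chart_at x U V phi phinv /\ chart_at (g x) U' V' psi psinv /\
    (forall y, U y -> U' (g y)) /\
    (forall u, V u -> psi (g (phinv u)) = N u).

(* coordinates: x1,x2,x3,x4 are indices 0,1,2,3 *)
Definition ix4 (k : nat) : Fin.t 4 :=
  match k with
  | O => Fin.F1
  | 1%nat => Fin.FS Fin.F1
  | 2%nat => Fin.FS (Fin.FS Fin.F1)
  | _ => Fin.FS (Fin.FS (Fin.FS Fin.F1))
  end.
Definition mk2 (a b : R) : Rn 2 :=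
  fun i => match proj1_sig (Fin.to_nat i) with O => a | _ => b end.
Definition mk4 (a b c d : R) : Rn 4 :=
  fun i => match proj1_sig (Fin.to_nat i) with
           | O => a | 1%nat => b | 2%nat => c | _ => d end.
Definition x_ (u : Rn 4) (k : nat) : R := u (ix4 k).

Definition NF_regular (u : Rn 4) : Rn 2 := mk2 (x_ u 0) (x_ u 1).
Definition NF_definite_fold (u : Rn 4) : Rn 2 :=
  mk2 (x_ u 0) (x_ u 1 ^ 2 + x_ u 2 ^ 2 + x_ u 3 ^ 2).
Definition NF_indefinite_fold (u : Rn 4) : Rn 2 :=
  mk2 (x_ u 0) (x_ u 1 ^ 2 + x_ u 2 ^ 2 - x_ u 3 ^ 2).
Definition NF_cusp (s : R) (u : Rn 4) : Rn 2 :=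
  mk2 (x_ u 0) (x_ u 1 ^ 2 + s * x_ u 2 ^ 2 + x_ u 0 * x_ u 3 + x_ u 3 ^ 3).

Definition excellent (g : Rn 4 -> Rn 2) : Prop :=
  forall x,
    local_form g NF_regular x \/ local_form g NF_definite_fold x \/
    local_form g NF_indefinite_fold x \/
    local_form g (NF_cusp 1) x \/ local_form g (NF_cusp (-1)) x.

Definition has_definite_fold (g : Rn 4 -> Rn 2) : Prop :=
  exists x, local_form g NF_definite_fold x.

(* Cplx^2 = R^4 via (z,w) = (x1 + i x2, x3 + i x4); Cplx = R^2 via (Re, Im) *)
Definition realify (F : Cplx -> Cplx -> Cplx) : Rn 4 -> Rn 2 :=
  fun u => let r := F (x_ u 0, x_ u 1) (x_ u 2, x_ u 3) in mk2 (fst r) (snd r).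

Definition real_analytic_01 (h : R -> R) : Prop :=
  forall t0, 0 <= t0 <= 1 -> exists r (c : nat -> R), 0 < r /\
    forall t, 0 <= t <= 1 -> Rabs (t - t0) < r ->
      infinite_sum (fun k => c k * (t - t0) ^ k) (h t).

Definition C_analytic_01 (h : R -> Cplx) : Prop :=
  real_analytic_01 (fun t => fst (h t)) /\ real_analytic_01 (fun t => snd (h t)).

Definition lin_def (f : Cplx -> Cplx -> Cplx) (a1 b1 a2 b2 : R -> Cplx) (t : R) : Cplx -> Cplx -> Cplx :=
  fun z w => Cadd (Cadd (Cadd (Cadd (f z w) (Cmul (a1 t) z)) (Cmul (b1 t) w))
                        (Cmul (a2 t) (Cconj z))) (Cmul (b2 t) (Cconj w)).

Definition is_linear_deformation (a1 b1 a2 b2 : R -> Cplx) : Prop :=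
  C_analytic_01 a1 /\ C_analytic_01 b1 /\ C_analytic_01 a2 /\ C_analytic_01 b2 /\
  a1 0 = C0 /\ b1 0 = C0 /\ a2 0 = C0 /\ b2 0 = C0.

Definition fpq (p q : nat) : Cplx -> Cplx -> Cplx := fun z w => Cadd (Cpow z p) (Cpow w q).

Definition Pmap (p q : nat) (mu : Cplx) : Cplx -> Cplx -> Cplx :=
  fun u v => Cadd (Cadd (Cmul mu (Cadd (Cpow u p) (Cconj u))) (Cpow v q)) (Cconj v).

From Stdlib Require Import Reals Lra Lia List FunctionalExtensionality.
Import ListNotations.
Open Scope R_scope.

(* The deformation is a1 = b1 = 0, a2 t = t^(q(p-1)) a, b2 t = t^(p(q-1)) b.
   For t > 0 the substitution z = t^q c1 u, w = t^p c2 v turns f_t into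
   t^(pq) b conj(c2) P(u,v;mu), because c1^p = a conj(c1) and c2^q = b conj(c2).
   Multiplication by a nonzero complex number is, in real coordinates, a
   product of elementary shears, each of which preserves smoothness by the
   chain rule; hence f_t is P up to linear changes of coordinates in source
   and target, and local normal forms (in particular excellence and the
   absence of definite folds) are transported along them. *)

(** * Partial derivatives along coordinate lines *)

Lemma upd_upd {n} (x : Rn n) i a b : upd (upd x i a) i b = upd x i (a + b).
Proof.
  apply functional_extensionality; intro m; unfold upd.
  destruct (Fin.eq_dec i m); lra.
Qed.

Lemma upd_0 {n} (x : Rn n) i : upd x i 0 = x.
Proof.
  apply functional_extensionality; intro m; unfold upd.
  destruct (Fin.eq_dec i m); lra.
Qed.

Lemma near_upd_upd {n} (y : Rn n) i j h t d :
  Rabs h + Rabs t < d -> near y (upd (upd y j h) i t) d.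
Proof.
  intros H m. unfold upd.
  pose proof (Rabs_pos h). pose proof (Rabs_pos t).
  destruct (Fin.eq_dec j m); destruct (Fin.eq_dec i m).
  - replace (y m + h + t - y m) with (h + t) by ring.
    eapply Rle_lt_trans; [apply Rabs_triang | lra].
  - replace (y m + h - y m) with h by ring; lra.
  - replace (y m + t - y m) with t by ring; lra.
  - replace (y m - y m) with 0 by ring; rewrite Rabs_R0; lra.
Qed.

Lemma near_upd {n} (y : Rn n) i t d : Rabs t < d -> near y (upd y i t) d.
Proof.
  intro H. rewrite <- (upd_0 y i) at 2. apply near_upd_upd. rewrite Rabs_R0. lra.
Qed.

Lemma near_refl {n} (y : Rn n) d : 0 < d -> near y y d.
Proof. intros H m. replace (y m - y m) with 0 by ring. rewrite Rabs_R0. lra. Qed.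

Lemma near_Rmin_l {n} (x y : Rn n) d d' : near x y (Rmin d d') -> near x y d.
Proof. intros H m. eapply Rlt_le_trans; [apply H | apply Rmin_l]. Qed.

Lemma near_Rmin_r {n} (x y : Rn n) d d' : near x y (Rmin d d') -> near x y d'.
Proof. intros H m. eapply Rlt_le_trans; [apply H | apply Rmin_r]. Qed.

Lemma Rabs_mul_le_half c x e :
  0 < e -> Rabs x <= e / (2 * (Rabs c + 1)) -> Rabs (c * x) <= e / 2.
Proof.
  intros He Hx. pose proof (Rabs_pos c). rewrite Rabs_mult.
  apply Rle_trans with (Rabs c * (e / (2 * (Rabs c + 1)))).
  - apply Rmult_le_compat_l; lra.
  - apply (Rmult_le_reg_r (2 * (Rabs c + 1))); [lra|].
    replace (Rabs c * (e / (2 * (Rabs c + 1))) * (2 * (Rabs c + 1)))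
      with (Rabs c * e) by (field; lra).
    nra.
Qed.

Lemma partial_on_line {n} (U : Rn n -> Prop) i f g w t0 :
  partial_on U i f g -> U (upd w i t0) ->
  derivable_pt_lim (fun t => f (upd w i t)) t0 (g (upd w i t0)).
Proof.
  intros Hp HU eps Heps.
  destruct (Hp _ HU eps Heps) as [del Hd]. exists del. intros h Hh0 Hh.
  specialize (Hd h Hh0 Hh).
  rewrite upd_upd, Rplus_0_l, upd_upd, Rplus_0_r in Hd. exact Hd.
Qed.

Lemma mvt_upd {n} (U : Rn n -> Prop) i f di w s :
  partial_on U i f di ->
  (forall t, Rabs t <= Rabs s -> U (upd w i t)) ->
  exists z, Rabs z <= Rabs s /\ f (upd w i s) - f w = s * di (upd w i z).
Proof.
  intros Hp HU.
  destruct (Rtotal_order s 0) as [Hs | [Hs | Hs]].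
  - destruct (MVT_cor2 (fun t => f (upd w i t)) (fun t => di (upd w i t)) s 0 Hs)
      as [z [Hz1 Hz2]].
    + intros c Hc. apply (partial_on_line U); auto.
      apply HU. rewrite !Rabs_left1 by lra. lra.
    + exists z. rewrite upd_0 in Hz1. split; [rewrite !Rabs_left1 by lra|]; lra.
  - subst. exists 0. rewrite upd_0. split; [lra | ring].
  - destruct (MVT_cor2 (fun t => f (upd w i t)) (fun t => di (upd w i t)) 0 s Hs)
      as [z [Hz1 Hz2]].
    + intros c Hc. apply (partial_on_line U); auto.
      apply HU. rewrite !Rabs_right by lra. lra.
    + exists z. rewrite upd_0 in Hz1. split; [rewrite !Rabs_right by lra|]; lra.
Qed.

(* Chain rule along the line h |-> y + h e_j + c h e_i: the increment splits
   into a j-step, controlled by the j-partial, and an i-step, which the mean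
   value theorem and the continuity of the i-partial control. *)
Lemma derivable_pt_lim_upd_upd {n} (U : Rn n -> Prop) i j f di dj y c :
  is_open U -> U y -> partial_on U j f dj -> partial_on U i f di -> cont_at di y ->
  derivable_pt_lim (fun h => f (upd (upd y j h) i (c * h))) 0 (dj y + c * di y).
Proof.
  intros HO Hy Hj Hi Hc eps Heps.
  set (K := Rabs c + 1).
  assert (HK : 0 < K) by (unfold K; pose proof (Rabs_pos c); lra).
  destruct (Hj y Hy (eps / 2)) as [d1 Hd1]; [lra|].
  destruct (Hc (eps / (2 * K))) as [d2 [Hd2 Hd2']]; [apply Rdiv_lt_0_compat; lra|].
  destruct (HO y Hy) as [d3 [Hd3 Hd3']].
  assert (Hpos : 0 < Rmin d1 (Rmin d2 d3 / K)).
  { pose proof (cond_pos d1). apply Rmin_pos; auto.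
    apply Rdiv_lt_0_compat; [apply Rmin_pos|]; lra. }
  exists (mkposreal _ Hpos). simpl. intros h Hh0 Hh.
  assert (Hh1 : Rabs h < d1) by (eapply Rlt_le_trans; [exact Hh | apply Rmin_l]).
  assert (HhK : Rabs h * K < Rmin d2 d3).
  { assert (Rabs h < Rmin d2 d3 / K) by (eapply Rlt_le_trans; [exact Hh | apply Rmin_r]).
    apply (Rmult_lt_reg_r (/ K)); [apply Rinv_0_lt_compat; lra|].
    rewrite Rmult_assoc, Rinv_r by lra. lra. }
  assert (Hsmall : forall z, Rabs z <= Rabs (c * h) -> Rabs h + Rabs z < Rmin d2 d3).
  { intros z Hz. rewrite Rabs_mult in Hz. unfold K in HhK. nra. }
  destruct (mvt_upd U i f di (upd y j h) (c * h) Hi) as [z [Hz Hz']].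
  { intros t Ht. apply Hd3'. apply near_upd_upd.
    eapply Rlt_le_trans; [apply Hsmall; exact Ht | apply Rmin_r]. }
  specialize (Hd1 h Hh0 Hh1). rewrite Rplus_0_l, upd_0 in Hd1.
  assert (Hdi : Rabs (di (upd (upd y j h) i z) - di y) < eps / (2 * K)).
  { apply Hd2'. apply near_upd_upd.
    eapply Rlt_le_trans; [apply Hsmall; exact Hz | apply Rmin_l]. }
  rewrite Rplus_0_l, Rmult_0_r, !upd_0.
  replace ((f (upd (upd y j h) i (c * h)) - f y) / h - (dj y + c * di y))
    with (c * (di (upd (upd y j h) i z) - di y) + ((f (upd y j h) - f y) / h - dj y))
    by (replace (f (upd (upd y j h) i (c * h)))
          with (f (upd y j h) + c * h * di (upd (upd y j h) i z)) by lra;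
        field; auto).
  eapply Rle_lt_trans; [apply Rabs_triang|].
  assert (Rabs (c * (di (upd (upd y j h) i z) - di y)) <= eps / 2)
    by (apply Rabs_mul_le_half; unfold K in Hdi; lra).
  lra.
Qed.

(** * Smoothness is a local, linear property *)

Lemma partial_on_ext {n} (U : Rn n -> Prop) i f f' g :
  is_open U -> (forall x, U x -> f x = f' x) -> partial_on U i f g -> partial_on U i f' g.
Proof.
  intros HO He Hp x Hx eps Heps.
  destruct (Hp x Hx eps Heps) as [d Hd].
  destruct (HO x Hx) as [d3 [Hd3 Hd3']].
  assert (Hpos : 0 < Rmin d d3) by (apply Rmin_pos; [apply cond_pos | lra]).
  exists (mkposreal _ Hpos). simpl. intros h Hh0 Hh.
  assert (Rabs h < d) by (eapply Rlt_le_trans; [exact Hh | apply Rmin_l]).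
  assert (Rabs h < d3) by (eapply Rlt_le_trans; [exact Hh | apply Rmin_r]).
  rewrite <- !He; auto.
  - apply Hd3'. rewrite upd_0. apply near_refl; auto.
  - apply Hd3'. apply near_upd. rewrite Rplus_0_l. auto.
Qed.

Lemma cont_at_ext {n} (U : Rn n -> Prop) g g' x :
  is_open U -> U x -> (forall y, U y -> g y = g' y) -> cont_at g x -> cont_at g' x.
Proof.
  intros HO Hx He Hc eps Heps.
  destruct (Hc eps Heps) as [d [Hd Hd']].
  destruct (HO x Hx) as [d3 [Hd3 Hd3']].
  exists (Rmin d d3). split; [apply Rmin_pos; auto|].
  intros y Hy. rewrite <- !He; auto.
  - apply Hd'. exact (near_Rmin_l _ _ _ _ Hy).
  - apply Hd3'. exact (near_Rmin_r _ _ _ _ Hy).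
Qed.

Lemma iter_partial_ext {n} (U : Rn n -> Prop) l f f' g :
  is_open U -> (forall x, U x -> f x = f' x) -> iter_partial U l f g ->
  exists g', iter_partial U l f' g' /\ forall x, U x -> g x = g' x.
Proof.
  intros HO He H. destruct H as [f | i l f g h Hp Hl].
  - exists f'. split; [constructor | auto].
  - exists h. split; [|auto]. econstructor; [|eauto]. eapply partial_on_ext; eauto.
Qed.

Lemma iter_partial_lin {n} (U : Rn n -> Prop) l c : forall f g F G,
  iter_partial U l f F -> iter_partial U l g G ->
  iter_partial U l (fun x => f x + c * g x) (fun x => F x + c * G x).
Proof.
  induction l as [|i l IH]; intros f g F G H1 H2.
  - inversion H1; inversion H2; subst. constructor.
  - inversion H1 as [|? ? ? f' ? Hf Hf']; subst.
    inversion H2 as [|? ? ? g' ? Hg Hg']; subst.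
    econstructor; [|apply IH; eauto].
    intros x Hx.
    exact (derivable_pt_lim_plus _ _ _ _ _ (Hf x Hx)
             (derivable_pt_lim_scal _ c _ _ (Hg x Hx))).
Qed.

Lemma cont_at_lin {n} (f g : Rn n -> R) c x :
  cont_at f x -> cont_at g x -> cont_at (fun y => f y + c * g y) x.
Proof.
  intros Hf Hg eps Heps.
  assert (HK : 0 < 2 * (Rabs c + 1)) by (pose proof (Rabs_pos c); lra).
  destruct (Hf (eps / 2)) as [d1 [Hd1 Hd1']]; [lra|].
  destruct (Hg (eps / (2 * (Rabs c + 1)))) as [d2 [Hd2 Hd2']];
    [apply Rdiv_lt_0_compat; lra|].
  exists (Rmin d1 d2). split; [apply Rmin_pos; auto|].
  intros y Hy.
  specialize (Hd1' y (near_Rmin_l _ _ _ _ Hy)).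
  specialize (Hd2' y (near_Rmin_r _ _ _ _ Hy)).
  replace (f y + c * g y - (f x + c * g x)) with ((f y - f x) + c * (g y - g x)) by ring.
  eapply Rle_lt_trans; [apply Rabs_triang|].
  assert (Rabs (c * (g y - g x)) <= eps / 2) by (apply Rabs_mul_le_half; lra).
  lra.
Qed.

Lemma smooth_on_lin {n} (U : Rn n -> Prop) f g c :
  smooth_on U f -> smooth_on U g -> smooth_on U (fun x => f x + c * g x).
Proof.
  intros Hf Hg l.
  destruct (Hf l) as [F [HF HF']]. destruct (Hg l) as [G [HG HG']].
  exists (fun x => F x + c * G x). split; [apply iter_partial_lin; auto|].
  intros x Hx. apply cont_at_lin; auto.
Qed.

Lemma smooth_on_cont {n} (U : Rn n -> Prop) f x : smooth_on U f -> U x -> cont_at f x.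
Proof.
  intros H Hx. destruct (H []) as [g [Hg Hg']]. inversion Hg; subst. auto.
Qed.

(* Partials are unique on an open set, so every iterated partial of the
   chosen first partial is one of [f]. *)
Lemma smooth_on_partial {n} (U : Rn n -> Prop) f k :
  is_open U -> smooth_on U f -> exists d, partial_on U k f d /\ smooth_on U d.
Proof.
  intros HO Hs. destruct (Hs [k]) as [g [Hg _]].
  inversion Hg as [|? ? ? d0 ? Hp0 Hr0]; subst.
  exists d0. split; auto.
  intro l. destruct (Hs (k :: l)) as [g' [Hg' Hc']].
  inversion Hg' as [|? ? ? g1 ? Hp1 Hl1]; subst.
  assert (Heq : forall x, U x -> g1 x = d0 x).
  { intros x Hx. eapply uniqueness_limite; [apply Hp1 | apply Hp0]; auto. }
  destruct (iter_partial_ext U l g1 d0 g' HO Heq Hl1) as [g'' [Hi He]].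
  exists g''. split; auto. intros x Hx. eapply cont_at_ext; eauto.
Qed.

(** * Linear changes of coordinates *)

(* [shear i j c] adds [c * x_j] to [x_i]; for [i = j] it scales [x_i] by [1 + c]. *)
Definition shear {n} (i j : Fin.t n) (c : R) (x : Rn n) : Rn n := upd x i (c * x j).

Definition smooth_transform {n} (T : Rn n -> Rn n) : Prop :=
  (forall U f, is_open U -> smooth_on U f ->
     smooth_on (fun x => U (T x)) (fun x => f (T x))) /\
  (forall m (V : Rn m -> Prop) G, smooth_map_on V G -> smooth_map_on V (fun u => T (G u))) /\
  (forall U, is_open U -> is_open (fun x => U (T x))).

Lemma near_shear {n} (i j : Fin.t n) c x y d :
  near x y d -> near (shear i j c x) (shear i j c y) (d * (1 + Rabs c)).
Proof.
  intros H m. unfold shear, upd.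
  pose proof (H m). pose proof (H j). pose proof (Rabs_pos c).
  pose proof (Rabs_pos (y m - x m)).
  destruct (Fin.eq_dec i m).
  - replace (y m + c * y j - (x m + c * x j)) with ((y m - x m) + c * (y j - x j)) by ring.
    eapply Rle_lt_trans; [apply Rabs_triang|]. rewrite Rabs_mult.
    assert (Rabs c * Rabs (y j - x j) <= Rabs c * d) by (apply Rmult_le_compat_l; lra).
    nra.
  - nra.
Qed.

Lemma near_shear_scaled {n} (i j : Fin.t n) c x y d :
  near x y (d / (1 + Rabs c)) -> near (shear i j c x) (shear i j c y) d.
Proof.
  intro H. apply (near_shear i j c) in H. pose proof (Rabs_pos c).
  replace (d / (1 + Rabs c) * (1 + Rabs c)) with d in H by (field; lra). exact H.
Qed.

Lemma is_open_shear {n} (i j : Fin.t n) c U :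
  is_open U -> is_open (fun x => U (shear i j c x)).
Proof.
  intros HO x Hx. destruct (HO _ Hx) as [e [He He']].
  pose proof (Rabs_pos c).
  exists (e / (1 + Rabs c)). split; [apply Rdiv_lt_0_compat; lra|].
  intros y Hy. apply He'. apply near_shear_scaled. exact Hy.
Qed.

Lemma cont_at_shear {n} (i j : Fin.t n) c f x :
  cont_at f (shear i j c x) -> cont_at (fun y => f (shear i j c y)) x.
Proof.
  intros Hc eps Heps. destruct (Hc eps Heps) as [d [Hd Hd']].
  pose proof (Rabs_pos c).
  exists (d / (1 + Rabs c)). split; [apply Rdiv_lt_0_compat; lra|].
  intros y Hy. apply Hd'. apply near_shear_scaled. exact Hy.
Qed.

Lemma shear_upd_other {n} (i j k : Fin.t n) c x h :
  k <> j -> shear i j c (upd x k h) = upd (shear i j c x) k h.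
Proof.
  intro Hk. apply functional_extensionality; intro m. unfold shear, upd.
  destruct (Fin.eq_dec k j); [congruence|].
  destruct (Fin.eq_dec i m); destruct (Fin.eq_dec k m); lra.
Qed.

Lemma shear_upd_source {n} (i j : Fin.t n) c x h :
  shear i j c (upd x j h) = upd (upd (shear i j c x) j h) i (c * h).
Proof.
  apply functional_extensionality; intro m. unfold shear, upd.
  destruct (Fin.eq_dec j j) as [_ | Hjj]; [|congruence].
  destruct (Fin.eq_dec i m); destruct (Fin.eq_dec j m); subst; try lra;
  try (destruct (Fin.eq_dec m m); [lra | congruence]);
  try (destruct (Fin.eq_dec i j); [congruence | lra]).
Qed.

(* Chain rule for a shear: the [j]-partial of [f o shear i j c] is
   [(d_j f + c d_i f) o shear i j c], all other partials are transported. *)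
Lemma iter_partial_shear {n} (i j : Fin.t n) c U :
  is_open U -> forall l f, smooth_on U f ->
  exists g, iter_partial (fun x => U (shear i j c x)) l (fun x => f (shear i j c x)) g /\
            forall x, U (shear i j c x) -> cont_at g x.
Proof.
  intros HO l. induction l as [|k l IH]; intros f Hs.
  - exists (fun x => f (shear i j c x)). split; [constructor|].
    intros x Hx. apply cont_at_shear. eapply smooth_on_cont; eauto.
  - destruct (smooth_on_partial U f k HO Hs) as [dk [Hdk Hsk]].
    destruct (smooth_on_partial U f j HO Hs) as [dj [Hdj Hsj]].
    destruct (smooth_on_partial U f i HO Hs) as [di [Hdi Hsi]].
    destruct (Fin.eq_dec k j) as [-> | Hkj].
    + destruct (IH (fun x => dj x + c * di x)) as [g [Hg Hg']]; [apply smooth_on_lin; auto|].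
      exists g. split; auto. econstructor; [|exact Hg].
      intros x Hx. simpl.
      replace (fun h => f (shear i j c (upd x j h)))
        with (fun h => f (upd (upd (shear i j c x) j h) i (c * h)))
        by (apply functional_extensionality; intro h; rewrite shear_upd_source; auto).
      apply derivable_pt_lim_upd_upd with (U := U); auto.
      eapply smooth_on_cont; eauto.
    + destruct (IH _ Hsk) as [g [Hg Hg']].
      exists g. split; auto. econstructor; [|exact Hg].
      intros x Hx. simpl.
      replace (fun h => f (shear i j c (upd x k h)))
        with (fun h => f (upd (shear i j c x) k h))
        by (apply functional_extensionality; intro h; rewrite shear_upd_other; auto).
      apply Hdk. auto.
Qed.

Lemma shear_smooth_transform {n} (i j : Fin.t n) c : smooth_transform (shear i j c).
Proof.
  split; [|split].
  - intros U f HO Hs l. destruct (iter_partial_shear i j c U HO l f Hs) as [g Hg]. eauto.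
  - intros m V G HG k. unfold shear, upd.
    destruct (Fin.eq_dec i k) as [<- |].
    + exact (smooth_on_lin V (fun u => G u i) (fun u => G u j) c (HG i) (HG j)).
    + apply HG.
  - apply is_open_shear.
Qed.

Lemma smooth_transform_comp {n} (T1 T2 : Rn n -> Rn n) :
  smooth_transform T1 -> smooth_transform T2 -> smooth_transform (fun x => T1 (T2 x)).
Proof.
  intros [A1 [B1 C1]] [A2 [B2 C2]]. split; [|split].
  - intros U f HO Hs. exact (A2 _ _ (C1 U HO) (A1 U f HO Hs)).
  - intros m V G HG. apply B1, B2, HG.
  - intros U HO. apply (C2 (fun y => U (T1 y))), C1, HO.
Qed.

Lemma smooth_transform_ext {n} (T T' : Rn n -> Rn n) :
  (forall x, T x = T' x) -> smooth_transform T -> smooth_transform T'.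
Proof.
  intros H G. replace T' with T; auto. apply functional_extensionality; auto.
Qed.

(** * Complex multiplication on a pair of real coordinates *)

Ltac cplx := repeat match goal with z : Cplx |- _ => destruct z end;
             unfold Cmul, Cadd, Cconj, RtoC, C0, Cinv, Cdiv in *; simpl in *.

Lemma Cplx_nonzero z : z <> C0 -> fst z <> 0 \/ snd z <> 0.
Proof.
  destruct z as [x y]; simpl; intro H.
  destruct (Req_dec x 0); destruct (Req_dec y 0); subst; auto.
Qed.

Lemma Cnorm2_neq0 z : z <> C0 -> fst z ^ 2 + snd z ^ 2 <> 0.
Proof. intro H. destruct (Cplx_nonzero z H); nra. Qed.

Lemma Cinv_l z : z <> C0 -> Cmul (Cinv z) z = (1, 0).
Proof.
  intro H. pose proof (Cnorm2_neq0 z H). destruct z as [x y].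
  unfold Cmul, Cinv in *; cbn [fst snd] in *. f_equal; field; auto.
Qed.

Lemma Cinv_r z : z <> C0 -> Cmul z (Cinv z) = (1, 0).
Proof.
  intro H. rewrite <- (Cinv_l z H). destruct z, (Cinv _). cplx. f_equal; ring.
Qed.

Lemma Cmul_neq0 x y : x <> C0 -> y <> C0 -> Cmul x y <> C0.
Proof.
  intros Hx Hy E. apply Hy.
  replace y with (Cmul (Cmul (Cinv x) x) y) by (rewrite Cinv_l by auto; cplx; f_equal; ring).
  replace (Cmul (Cmul (Cinv x) x) y) with (Cmul (Cinv x) (Cmul x y))
    by (destruct x, y, (Cinv _); cplx; f_equal; ring).
  rewrite E. destruct (Cinv x). cplx. f_equal; ring.
Qed.

Lemma Cinv_neq0 z : z <> C0 -> Cinv z <> C0.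
Proof.
  intros H E. pose proof (Cinv_r z H) as Hr. rewrite E in Hr.
  destruct z. cplx. injection Hr. lra.
Qed.

Lemma Cconj_neq0 x : x <> C0 -> Cconj x <> C0.
Proof.
  destruct x as [r s]; unfold Cconj, C0; simpl; intros H E.
  injection E; intros. apply H. f_equal; lra.
Qed.

Lemma RtoC_neq0 l : l <> 0 -> RtoC l <> C0.
Proof. unfold RtoC, C0. intros H E. injection E. auto. Qed.

Lemma Cdiv_mul x y : y <> C0 -> Cmul (Cdiv x y) y = x.
Proof.
  intro H. unfold Cdiv. transitivity (Cmul x (Cmul (Cinv y) y)).
  - destruct x, y, (Cinv _). cplx. f_equal; ring.
  - rewrite Cinv_l by exact H. destruct x. cplx. f_equal; ring.
Qed.

(* [cmul_at i j z x] multiplies the coordinate pair (x_i, x_j), read as the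
   complex number x_i + I x_j, by [z]. *)
Definition cmul_at {n} (i j : Fin.t n) (z : Cplx) (x : Rn n) : Rn n :=
  fun k => if Fin.eq_dec i k then fst z * x i - snd z * x j
           else if Fin.eq_dec j k then snd z * x i + fst z * x j else x k.

Ltac decide_fin := repeat match goal with |- context [Fin.eq_dec ?a ?b] =>
  let e := fresh "e" in destruct (Fin.eq_dec a b) as [e|e];
    [try (exfalso; congruence) | try (exfalso; congruence)] end.

Ltac case_fin i j k :=
  destruct (Fin.eq_dec k i); [subst k|]; [|destruct (Fin.eq_dec k j); [subst k|]].

Lemma shear_at_source {n} (i j : Fin.t n) c x : shear i j c x i = x i + c * x j.
Proof. unfold shear, upd. destruct (Fin.eq_dec i i); [auto | congruence]. Qed.

Lemma shear_at_other {n} (i j : Fin.t n) c x m : i <> m -> shear i j c x m = x m.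
Proof. intro H. unfold shear, upd. destruct (Fin.eq_dec i m); [congruence | auto]. Qed.

Ltac eval_shear :=
  repeat (rewrite shear_at_source || (rewrite shear_at_other by congruence)).

(* Gaussian elimination of the 2x2 matrix [[r,-s],[s,r]]; when r = 0 a swap
   (three shears) first brings a nonzero entry into pivot position. *)
Lemma cmul_at_smooth_transform {n} (i j : Fin.t n) z :
  i <> j -> z <> C0 -> smooth_transform (cmul_at i j z).
Proof.
  intros Hij Hz. destruct z as [r s].
  destruct (Req_dec r 0) as [Hr | Hr].
  - assert (Hs : s <> 0) by (destruct (Cplx_nonzero _ Hz); simpl in *; tauto). subst r.
    apply (smooth_transform_ext
      (fun x => shear j j (s - 1) (shear i i (s - 1)
                  (shear j i 1 (shear i j (-1) (shear j i 1 x)))))).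
    + intro x. apply functional_extensionality; intro k. unfold cmul_at; simpl.
      case_fin i j k; decide_fin; eval_shear; ring.
    + do 4 (apply smooth_transform_comp; [apply shear_smooth_transform|]).
      apply shear_smooth_transform.
  - apply (smooth_transform_ext
      (fun x => shear j i (s / r) (shear j j (r + s * s / r - 1)
                  (shear i i (r - 1) (shear i j (- s / r) x))))).
    + intro x. apply functional_extensionality; intro k. unfold cmul_at; simpl.
      case_fin i j k; decide_fin; eval_shear; field; auto.
    + do 3 (apply smooth_transform_comp; [apply shear_smooth_transform|]).
      apply shear_smooth_transform.
Qed.

Lemma cmul_at_mul {n} (i j : Fin.t n) z z' x :
  i <> j -> cmul_at i j z' (cmul_at i j z x) = cmul_at i j (Cmul z' z) x.
Proof.
  intro Hij. apply functional_extensionality; intro k. unfold cmul_at, Cmul; simpl.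
  case_fin i j k; decide_fin; ring.
Qed.

Lemma cmul_at_1 {n} (i j : Fin.t n) x : cmul_at i j (1, 0) x = x.
Proof.
  apply functional_extensionality; intro k. unfold cmul_at; simpl.
  case_fin i j k; decide_fin; ring.
Qed.

Lemma cmul_at_comm {n} (i j k l : Fin.t n) z z' x :
  i <> k -> i <> l -> j <> k -> j <> l ->
  cmul_at i j z (cmul_at k l z' x) = cmul_at k l z' (cmul_at i j z x).
Proof.
  intros. apply functional_extensionality; intro m. unfold cmul_at.
  case_fin i j m; [| |case_fin k l m]; decide_fin; auto.
Qed.

(** * Transport of local normal forms *)

Lemma chart_at_transform {n} (T Tinv : Rn n -> Rn n) x0 U V phi phinv :
  smooth_transform T -> smooth_transform Tinv ->
  (forall u, Tinv (T u) = u) -> (forall u, T (Tinv u) = u) ->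
  chart_at x0 U V phi phinv ->
  chart_at (T x0) (fun x => U (Tinv x)) V (fun x => phi (Tinv x)) (fun u => T (phinv u)).
Proof.
  intros [_ [GT _]] [GI1 [_ GI3]] H1 H2 [HU [HV [Hx0 [Hphi [Hs1 [Hs2 [Hb1 Hb2]]]]]]].
  split; [apply GI3; auto|]. split; [auto|].
  split; [rewrite H1; auto|]. split; [rewrite H1; auto|].
  split; [intro j; apply (GI1 U (fun u => phi u j)); auto|].
  split; [apply GT; auto|].
  split.
  - intros x Hx. destruct (Hb1 _ Hx) as [A B]. rewrite B. auto.
  - intros u Hu. destruct (Hb2 _ Hu) as [A B]. rewrite H1. auto.
Qed.

Lemma local_form_transform (L Linv : Rn 4 -> Rn 4) (M Minv : Rn 2 -> Rn 2) g g' N y :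
  smooth_transform L -> smooth_transform Linv ->
  smooth_transform M -> smooth_transform Minv ->
  (forall u, Linv (L u) = u) -> (forall u, L (Linv u) = u) ->
  (forall v, Minv (M v) = v) -> (forall v, M (Minv v) = v) ->
  (forall x, g' x = M (g (Linv x))) ->
  local_form g N y -> local_form g' N (L y).
Proof.
  intros GL GLi GM GMi H1 H2 H3 H4 Hg
    [U [V [phi [phinv [U' [V' [psi [psinv [C1 [C2 [HUU HN]]]]]]]]]]].
  exists (fun x => U (Linv x)), V, (fun x => phi (Linv x)), (fun u => L (phinv u)),
         (fun z => U' (Minv z)), V', (fun z => psi (Minv z)), (fun v => M (psinv v)).
  split; [apply chart_at_transform; auto|].
  split; [replace (g' (L y)) with (M (g y)) by (rewrite Hg, H1; auto);
          apply chart_at_transform; auto|].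
  split.
  - intros x Hx. rewrite Hg, H3. auto.
  - intros u Hu. rewrite Hg, H3, H1. auto.
Qed.

(* In the coordinates (z, w) = (x1 + I x2, x3 + I x4) of [realify],
   [cmul4 al be] is (z, w) |-> (al z, be w) and [cmul2 m] is v |-> m v. *)
Definition cmul4 (al be : Cplx) (x : Rn 4) : Rn 4 :=
  cmul_at (ix4 0) (ix4 1) al (cmul_at (ix4 2) (ix4 3) be x).

Definition cmul2 (m : Cplx) (v : Rn 2) : Rn 2 := cmul_at Fin.F1 (Fin.FS Fin.F1) m v.

Lemma ix4_neq : ix4 0 <> ix4 1 /\ ix4 0 <> ix4 2 /\ ix4 0 <> ix4 3 /\
                ix4 1 <> ix4 2 /\ ix4 1 <> ix4 3 /\ ix4 2 <> ix4 3.
Proof. cbn. repeat split; intro E; repeat (apply Fin.FS_inj in E); discriminate. Qed.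

Lemma ix2_neq : (Fin.F1 : Fin.t 2) <> Fin.FS Fin.F1.
Proof. intro E. discriminate. Qed.

Lemma cmul4_smooth_transform al be :
  al <> C0 -> be <> C0 -> smooth_transform (cmul4 al be).
Proof.
  intros Ha Hb. pose proof ix4_neq as [H01 [_ [_ [_ [_ H23]]]]].
  exact (smooth_transform_comp _ _ (cmul_at_smooth_transform _ _ _ H01 Ha)
           (cmul_at_smooth_transform _ _ _ H23 Hb)).
Qed.

Lemma cmul2_smooth_transform m : m <> C0 -> smooth_transform (cmul2 m).
Proof. intro Hm. apply cmul_at_smooth_transform; [apply ix2_neq | exact Hm]. Qed.

Lemma cmul4_mul al be al' be' u :
  cmul4 al' be' (cmul4 al be u) = cmul4 (Cmul al' al) (Cmul be' be) u.
Proof.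
  pose proof ix4_neq as [? [? [? [? [? ?]]]]]. unfold cmul4.
  rewrite (cmul_at_comm (ix4 2) (ix4 3) (ix4 0) (ix4 1)) by auto.
  rewrite !cmul_at_mul; auto.
Qed.

Lemma cmul4_inv al be u :
  al <> C0 -> be <> C0 -> cmul4 (Cinv al) (Cinv be) (cmul4 al be u) = u.
Proof.
  intros Ha Hb. rewrite cmul4_mul, !Cinv_l by auto. unfold cmul4. rewrite !cmul_at_1. auto.
Qed.

Lemma cmul4_inv' al be u :
  al <> C0 -> be <> C0 -> cmul4 al be (cmul4 (Cinv al) (Cinv be) u) = u.
Proof.
  intros Ha Hb. rewrite cmul4_mul, !Cinv_r by auto. unfold cmul4. rewrite !cmul_at_1. auto.
Qed.

Lemma cmul2_inv m v : m <> C0 -> cmul2 (Cinv m) (cmul2 m v) = v.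
Proof. intro. unfold cmul2. rewrite cmul_at_mul, Cinv_l by (auto; apply ix2_neq). apply cmul_at_1. Qed.

Lemma cmul2_inv' m v : m <> C0 -> cmul2 m (cmul2 (Cinv m) v) = v.
Proof. intro. unfold cmul2. rewrite cmul_at_mul, Cinv_r by (auto; apply ix2_neq). apply cmul_at_1. Qed.

Lemma local_form_rescale (g g' : Rn 4 -> Rn 2) al be m N y :
  al <> C0 -> be <> C0 -> m <> C0 ->
  (forall u, g' (cmul4 al be u) = cmul2 m (g u)) ->
  local_form g N y -> local_form g' N (cmul4 al be y).
Proof.
  intros Ha Hb Hm Hg.
  apply (local_form_transform (cmul4 al be) (cmul4 (Cinv al) (Cinv be))
           (cmul2 m) (cmul2 (Cinv m)) g);
    intros; auto using cmul4_smooth_transform, cmul2_smooth_transform, Cinv_neq0,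
      cmul4_inv, cmul4_inv', cmul2_inv, cmul2_inv'.
  rewrite <- Hg, cmul4_inv'; auto.
Qed.

Lemma rescale_inv (g g' : Rn 4 -> Rn 2) al be m :
  al <> C0 -> be <> C0 -> m <> C0 ->
  (forall u, g' (cmul4 al be u) = cmul2 m (g u)) ->
  forall x, g (cmul4 (Cinv al) (Cinv be) x) = cmul2 (Cinv m) (g' x).
Proof.
  intros Ha Hb Hm Hg x.
  rewrite <- (cmul4_inv' al be x Ha Hb) at 2. rewrite Hg, cmul2_inv; auto.
Qed.

Lemma excellent_rescale (g g' : Rn 4 -> Rn 2) al be m :
  al <> C0 -> be <> C0 -> m <> C0 ->
  (forall u, g' (cmul4 al be u) = cmul2 m (g u)) ->
  excellent g -> excellent g'.
Proof.
  intros Ha Hb Hm Hg Hex x.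
  rewrite <- (cmul4_inv' al be x Ha Hb).
  destruct (Hex (cmul4 (Cinv al) (Cinv be) x)) as [X | [X | [X | [X | X]]]];
    apply (local_form_rescale g g' al be m) in X; auto.
Qed.

Lemma has_definite_fold_rescale (g g' : Rn 4 -> Rn 2) al be m :
  al <> C0 -> be <> C0 -> m <> C0 ->
  (forall u, g' (cmul4 al be u) = cmul2 m (g u)) ->
  has_definite_fold g' -> has_definite_fold g.
Proof.
  intros Ha Hb Hm Hg [x Hx].
  exists (cmul4 (Cinv al) (Cinv be) x).
  apply (local_form_rescale g' g (Cinv al) (Cinv be) (Cinv m));
    auto using Cinv_neq0, rescale_inv.
Qed.

Lemma realify_rescale (F G : Cplx -> Cplx -> Cplx) al be m :
  (forall z w, F (Cmul al z) (Cmul be w) = Cmul m (G z w)) ->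
  forall u, realify F (cmul4 al be u) = cmul2 m (realify G u).
Proof.
  intros H u. unfold realify.
  replace (x_ (cmul4 al be u) 0, x_ (cmul4 al be u) 1) with (Cmul al (x_ u 0, x_ u 1))
    by (unfold cmul4, x_, cmul_at, Cmul; cbn; f_equal; ring).
  replace (x_ (cmul4 al be u) 2, x_ (cmul4 al be u) 3) with (Cmul be (x_ u 2, x_ u 3))
    by (unfold cmul4, x_, cmul_at, Cmul; cbn; f_equal; ring).
  rewrite H. generalize (G (x_ u 0, x_ u 1) (x_ u 2, x_ u 3)); intros [r s].
  apply functional_extensionality; intro k.
  apply (Fin.caseS' k); [|intro k'; apply (Fin.caseS' k'); [|intro k''; inversion k'']];
    unfold cmul2, cmul_at, mk2, Cmul; cbn; ring.
Qed.

(** * The deformation *)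

Lemma Cpow_mul x y n : Cpow (Cmul x y) n = Cmul (Cpow x n) (Cpow y n).
Proof.
  induction n as [|n IH]; simpl; [cplx; f_equal; ring|].
  rewrite IH. generalize (Cpow x n) (Cpow y n). intros. cplx. f_equal; ring.
Qed.

Lemma Cpow_RtoC l n : Cpow (RtoC l) n = RtoC (l ^ n).
Proof. induction n as [|n IH]; simpl; [reflexivity|]. rewrite IH. cplx. f_equal; ring. Qed.

Lemma lin_def_antilinear f a2 b2 t z w :
  lin_def f (fun _ => C0) (fun _ => C0) a2 b2 t z w =
  Cadd (Cadd (f z w) (Cmul (a2 t) (Cconj z))) (Cmul (b2 t) (Cconj w)).
Proof.
  unfold lin_def. generalize (f z w) (a2 t) (b2 t). intros. cplx. f_equal; ring.
Qed.

Lemma fpq_rescale (p q : nat) a b c1 c2 mu l k U V :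
  l <> 0 -> k <> 0 -> l ^ p = k ^ q ->
  Cpow c1 p = Cmul a (Cconj c1) -> Cpow c2 q = Cmul b (Cconj c2) ->
  Cmul mu (Cmul b (Cconj c2)) = Cmul a (Cconj c1) ->
  let Z := Cmul (Cmul (RtoC l) c1) U in
  let W := Cmul (Cmul (RtoC k) c2) V in
  Cadd (Cadd (fpq p q Z W) (Cmul (Cmul (RtoC (l ^ p / l)) a) (Cconj Z)))
       (Cmul (Cmul (RtoC (k ^ q / k)) b) (Cconj W))
  = Cmul (Cmul (RtoC (l ^ p)) (Cmul b (Cconj c2))) (Pmap p q mu U V).
Proof.
  intros Hl Hk Hlk H1 H2 Hmu Z W. subst Z W.
  unfold fpq, Pmap. rewrite !Cpow_mul, !Cpow_RtoC, H1, H2, <- Hlk.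
  generalize (Cpow U p) (Cpow V q). intros P1 P2.
  transitivity (Cmul (RtoC (l ^ p))
                  (Cadd (Cmul (Cmul a (Cconj c1)) (Cadd P1 (Cconj U)))
                        (Cmul (Cmul b (Cconj c2)) (Cadd P2 (Cconj V))))).
  - generalize (l ^ p). intro s. cplx. f_equal; field; auto.
  - rewrite <- Hmu. generalize (l ^ p). intro s. cplx. f_equal; ring.
Qed.

Lemma pow_mul_pred t m n : t <> 0 -> (1 <= n)%nat -> t ^ (m * (n - 1)) = (t ^ m) ^ n / t ^ m.
Proof.
  intros Ht Hn. rewrite <- pow_mult.
  replace (m * n)%nat with (m * (n - 1) + m)%nat by (destruct n; lia).
  rewrite pow_add. field. apply pow_nonzero; exact Ht.
Qed.

Lemma real_analytic_01_monomial A n : real_analytic_01 (fun t => A * t ^ n).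
Proof.
  intros t0 _.
  set (c := fun k => if Compare_dec.le_lt_dec k n then A * C n k * t0 ^ (n - k) else 0).
  exists 1, c. split; [lra|]. intros t _ _.
  set (s := fun k => c k * (t - t0) ^ k).
  assert (Hn : sum_f_R0 s n = A * t ^ n).
  { replace (t ^ n) with (((t - t0) + t0) ^ n) by (f_equal; ring).
    rewrite binomial, scal_sum. apply sum_eq. intros i Hi.
    unfold s, c. destruct (Compare_dec.le_lt_dec i n); [ring | lia]. }
  assert (Htail : forall d, sum_f_R0 s (n + d) = A * t ^ n).
  { induction d as [|d IH]; [rewrite Nat.add_0_r; exact Hn|].
    rewrite Nat.add_succ_r. simpl. rewrite IH.
    unfold s, c. destruct (Compare_dec.le_lt_dec (S (n + d)) n); [lia | ring]. }
  intros eps Heps. exists n. intros m Hm.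
  replace m with (n + (m - n))%nat by lia. rewrite Htail, Rdist_eq. lra.
Qed.

Lemma real_analytic_01_ext h h' :
  (forall t, h t = h' t) -> real_analytic_01 h -> real_analytic_01 h'.
Proof. intros H. replace h' with h; auto. apply functional_extensionality; auto. Qed.

Lemma C_analytic_01_monomial n a : C_analytic_01 (fun t => Cmul (RtoC (t ^ n)) a).
Proof.
  destruct a as [a1 a2]. split.
  - apply (real_analytic_01_ext (fun t => a1 * t ^ n));
      [intro t; cplx; ring | apply real_analytic_01_monomial].
  - apply (real_analytic_01_ext (fun t => a2 * t ^ n));
      [intro t; cplx; ring | apply real_analytic_01_monomial].
Qed.

Lemma C_analytic_01_zero : C_analytic_01 (fun _ => C0).
Proof.
  split; apply (real_analytic_01_ext (fun t => 0 * t ^ 0));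
    try (intro; cplx; ring); apply real_analytic_01_monomial.
Qed.

Lemma monomial_at_0 n a : (1 <= n)%nat -> Cmul (RtoC (0 ^ n)) a = C0.
Proof. intro Hn. rewrite pow_i by lia. cplx. f_equal; ring. Qed.

Section Deformation.

Variables (p q : nat) (a b c1 c2 : Cplx).
Hypotheses (Hp : (1 <= p)%nat) (Hq : (1 <= q)%nat).
Hypotheses (Hc1 : Cpow c1 p = Cmul a (Cconj c1)) (Hc2 : Cpow c2 q = Cmul b (Cconj c2)).

Let mu := Cdiv (Cmul a (Cconj c1)) (Cmul b (Cconj c2)).

Definition deform_a (t : R) : Cplx := Cmul (RtoC (t ^ (q * (p - 1)))) a.
Definition deform_b (t : R) : Cplx := Cmul (RtoC (t ^ (p * (q - 1)))) b.

Lemma deformation_rescale t :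
  0 < t -> Cmul b (Cconj c2) <> C0 ->
  forall u, realify (lin_def (fpq p q) (fun _ => C0) (fun _ => C0) deform_a deform_b t)
              (cmul4 (Cmul (RtoC (t ^ q)) c1) (Cmul (RtoC (t ^ p)) c2) u)
            = cmul2 (Cmul (RtoC ((t ^ q) ^ p)) (Cmul b (Cconj c2)))
                    (realify (Pmap p q mu) u).
Proof.
  intros Ht Hbc. apply realify_rescale. intros U V.
  assert (Htq : t ^ q <> 0) by (apply pow_nonzero; lra).
  assert (Htp : t ^ p <> 0) by (apply pow_nonzero; lra).
  assert (Hs : (t ^ q) ^ p = (t ^ p) ^ q) by (rewrite <- !pow_mult; f_equal; lia).
  rewrite lin_def_antilinear. unfold deform_a, deform_b.
  rewrite !pow_mul_pred by (auto; lra).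
  apply fpq_rescale; auto. apply Cdiv_mul; exact Hbc.
Qed.

End Deformation.

Theorem lemma3p1 (p q : nat) (a b c1 c2 : Cplx) :
  (2 <= p)%nat -> (2 <= q)%nat ->
  a <> C0 -> b <> C0 -> c1 <> C0 -> c2 <> C0 ->
  Cpow c1 p = Cmul a (Cconj c1) ->
  Cpow c2 q = Cmul b (Cconj c2) ->
  let mu := Cdiv (Cmul a (Cconj c1)) (Cmul b (Cconj c2)) in
  excellent (realify (Pmap p q mu)) ->
  exists a1 b1 a2 b2 : R -> Cplx,
    is_linear_deformation a1 b1 a2 b2 /\
    (forall t, 0 < t <= 1 -> excellent (realify (lin_def (fpq p q) a1 b1 a2 b2 t))) /\
    (forall z w, lin_def (fpq p q) a1 b1 a2 b2 1 z w =
                 Cadd (Cadd (fpq p q z w) (Cmul a (Cconj z))) (Cmul b (Cconj w))) /\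
    (~ has_definite_fold (realify (Pmap p q mu)) ->
       forall t, 0 < t <= 1 ->
         ~ has_definite_fold (realify (lin_def (fpq p q) a1 b1 a2 b2 t))).
Proof.
  intros Hp Hq Ha Hb Hc1 Hc2 H1 H2 mu HP.
  assert (Hbc : Cmul b (Cconj c2) <> C0) by auto using Cmul_neq0, Cconj_neq0.
  assert (Hnz : forall t n c, 0 < t -> c <> C0 -> Cmul (RtoC (t ^ n)) c <> C0)
    by (intros; apply Cmul_neq0, H0; apply RtoC_neq0, pow_nonzero; lra).
  assert (Hres := fun t Ht => deformation_rescale p q a b c1 c2
                                ltac:(lia) ltac:(lia) H1 H2 t Ht Hbc).
  exists (fun _ => C0), (fun _ => C0), (deform_a p q a), (deform_b p q b).
  split; [|split; [|split]].
  - unfold is_linear_deformation, deform_a, deform_b.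
    split; [exact C_analytic_01_zero|]. split; [exact C_analytic_01_zero|].
    split; [apply C_analytic_01_monomial|]. split; [apply C_analytic_01_monomial|].
    repeat split; apply monomial_at_0; nia.
  - intros t [Ht _].
    exact (excellent_rescale _ _ _ _ _ (Hnz t q c1 Ht Hc1) (Hnz t p c2 Ht Hc2)
             (Hnz (t ^ q) p _ (pow_lt _ _ Ht) Hbc) (Hres t Ht) HP).
  - intros z w. rewrite lin_def_antilinear. unfold deform_a, deform_b. rewrite !pow1.
    generalize (fpq p q z w). intro F. cplx. f_equal; ring.
  - intros HnP t [Ht _] Hfold. apply HnP.
    exact (has_definite_fold_rescale _ _ _ _ _ (Hnz t q c1 Ht Hc1) (Hnz t p c2 Ht Hc2)
             (Hnz (t ^ q) p _ (pow_lt _ _ Ht) Hbc) (Hres t Ht) Hfold).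
Qed.
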